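(* Fix $M>0$. If $c,d\in\ell_{\infty,M}(X^\ast,\mathbb{K}^\ell)$, then for every $\epsilon>0$, with $M_\epsilon=M(1+\epsilon)$, one has $c\sqcup\!\sqcup\, d\in \ell_{\infty,M_\epsilon}(X^\ast,\mathbb{K}^\ell)$ and $$\|c\sqcup\!\sqcup\, d\|_{\ell_\infty,M_\epsilon}\leq K_\epsilon\,\|c\|_{\ell_\infty,M}\,\|d\|_{\ell_\infty,M},$$ where $K_\epsilon=\sup_{\eta\in X^\ast}(|\eta|+1)/(1+\epsilon)^{|\eta|}$, and moreover $K_\epsilon\leq \hat K_\epsilon:=e^{-1}(1+\epsilon)/\log(1+\epsilon)$.
   Context: $\mathbb{K}\in\{\mathbb{R},\mathbb{C}\}$. $X=\{x_0,x_1,\ldots,x_m\}$ is a finite alphabet of noncommuting letters, $X^\ast$ the set of words (finite sequences of letters, including the empty word $\emptyset$), $|\eta|$ the length of a word. A formal power series is a map $c\colon X^\ast\to\mathbb{K}^\ell$, written $c=\sum_\eta (c,\eta)\eta$; the set of these is $\mathbb{K}^\ell\langle\langle X\rangle\rangle$. The shuffle product $\sqcup\!\sqcup$ is the bilinear product determined on words by $(x_i\eta)\sqcup\!\sqcup(x_j\xi)=x_i(\eta\sqcup\!\sqcup(x_j\xi))+x_j((x_i\eta)\sqcup\!\sqcup\xi)$, $\eta\sqcup\!\sqcup\emptyset=\emptyset\sqcup\!\sqcup\eta=\eta$, extended to series by $(c\sqcup\!\sqcup d,\eta)=\sum_{\nu,\xi}(c,\nu)(d,\xi)(\nu\sqcup\!\sqcup\xi,\eta)$,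 and componentwise for $\mathbb{K}^\ell$-valued series. For $M>0$ and $c\in\mathbb{K}^\ell\langle\langle X\rangle\rangle$ put $\|c\|_{\ell_\infty,M}=\sup_{\eta\in X^\ast}|(c,\eta)|/(M^{|\eta|}|\eta|!)\in[0,\infty]$, where $|z|=\max_i|z_i|$ for $z\in\mathbb{K}^\ell$; $\ell_{\infty,M}(X^\ast,\mathbb{K}^\ell)$ is the Banach space of all $c$ with $\|c\|_{\ell_\infty,M}<\infty$. *)

From HB Require Import structures.
From mathcomp Require Import all_boot all_order all_algebra.
From mathcomp Require Import all_classical all_reals all_analysis.
From mathcomp Require Import complex.
Set Implicit Arguments. Unset Strict Implicit. Unset Printing Implicit Defensive.
Import Order.TTheory GRing.Theory Num.Theory.
Local Open Scope ring_scope.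

(* Alphabet X = {x_0,...,x_m} is 'I_(m.+1); words are seq 'I_(m.+1);
   |eta| = size eta. *)

(* shuffle of two words, as a multiset (list) of words:
   (x_i u) sh (x_j v) = x_i (u sh x_j v) + x_j (x_i u sh v),
   u sh [::] = [::] sh u = u. *)
Fixpoint shw {A : Type} (u v : seq A) {struct u} : seq (seq A) :=
  match u with
  | [::] => [:: v]
  | a :: u' =>
      let fix shw_r (v : seq A) : seq (seq A) :=
        match v with
        | [::] => [:: u]
        | b :: v' => map (cons a) (shw u' v) ++ map (cons b) (shw_r v')
        end in
      shw_r v
  end.

Definition shcoef {A : eqType} (nu xi eta : seq A) : nat := count_mem eta (shw nu xi).

Definition series (m l : nat) (K : Type) := seq 'I_m.+1 -> 'I_l -> K.

(* Only words with |nu| + |xi| = |eta| can have (nu sh xi, eta) <> 0, so the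
   sum is taken over all pairs of words of lengths k and |eta| - k. *)
Definition shuffle (m l : nat) (K : nzSemiRingType) (c d : series m l K) : series m l K :=
  fun eta i =>
    \sum_(k < (size eta).+1)
      \sum_(nu : k.-tuple 'I_m.+1)
        \sum_(xi : (size eta - k).-tuple 'I_m.+1)
           (c nu i * d xi i) *+ shcoef (nu : seq _) (xi : seq _) eta.

Definition vnorm (R : realType) (l : nat) (K : Type) (nrm : K -> R) (z : 'I_l -> K) : R :=
  \big[Num.max/0]_(i < l) nrm (z i).

Definition linf_norm (R : realType) (m l : nat) (K : Type) (nrm : K -> R)
    (M : R) (c : series m l K) : \bar R :=
  ereal_sup (range (fun eta : seq 'I_m.+1 =>
     (vnorm nrm (c eta) / (M ^+ size eta * (size eta)`!%:R))%:E)).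

Definition Keps (R : realType) (m : nat) (eps : R) : \bar R :=
  ereal_sup (range (fun eta : seq 'I_m.+1 =>
     ((size eta).+1%:R / (1 + eps) ^+ size eta)%:E)).

Definition Khat (R : realType) (eps : R) : R :=
  expR (-1) * (1 + eps) / ln (1 + eps).

Definition lemma3p3_for (R : realType) (K : nzSemiRingType) (nrm : K -> R) : Prop :=
  forall (m l : nat) (M : R), 0 < M ->
  forall c d : series m l K,
    (linf_norm nrm M c < +oo)%E -> (linf_norm nrm M d < +oo)%E ->
  forall eps : R, 0 < eps ->
    let Me := M * (1 + eps) in
    [/\ (linf_norm nrm Me (shuffle c d) < +oo)%E,
        (linf_norm nrm Me (shuffle c d) <= Keps m eps * linf_norm nrm M c * linf_norm nrm M d)%E
      & (Keps m eps <= (Khat eps)%:E)%E].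

(* Write n = |eta|.  The coefficient (c ⧢ d, eta) splits into n + 1 layers
   according to the length k of the word taken from c; summing the shuffle
   multiplicities (nu ⧢ xi, eta) over all words nu, xi of lengths k and n - k
   gives C(n, k), which cancels k! (n - k)! against n!.  Hence every layer is
   bounded by ||c|| ||d|| M^n n!, and the factor n + 1 is absorbed into
   (1 + eps)^n at the price K_eps.  Finally (n + 1) / (1 + eps)^n <= Khat eps
   is x <= e^(x - 1) at x = (n + 1) log (1 + eps). *)

From Pilot Require Import Defs.
From HB Require Import structures.
From mathcomp Require Import all_boot all_order all_algebra.
From mathcomp Require Import all_classical all_reals all_analysis.
From mathcomp Require Import complex.
From mathcomp Require Import ring.
Set Implicit Arguments. Unset Strict Implicit. Unset Printing Implicit Defensive.
Import Order.TTheory GRing.Theory Num.Theory.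

Section ShuffleCount.
Variable T : finType.

Lemma shw_nil_r (u : seq T) : shw u [::] = [:: u].
Proof. by case: u. Qed.

Lemma count_mem_map_cons (a b : T) (e : seq T) (s : seq (seq T)) :
  count_mem (a :: e) (map (cons b) s) = (b == a) * count_mem e s.
Proof.
elim: s => [|x s IH] /=; first by rewrite muln0.
by rewrite IH eqseq_cons; case: (b == a); rewrite ?mul1n ?mul0n.
Qed.

Lemma shcoef_cons (a b c : T) (nu xi eta : seq T) :
  shcoef (b :: nu) (c :: xi) (a :: eta) =
  (b == a) * shcoef nu (c :: xi) eta + (c == a) * shcoef (b :: nu) xi eta.
Proof. by rewrite /shcoef /= count_cat !count_mem_map_cons. Qed.

Lemma big_tuple0 (R : Type) (idx : R) (op : Monoid.law idx) (F : 0.-tuple T -> R) :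
  \big[op/idx]_(t : 0.-tuple T) F t = F [tuple].
Proof. by rewrite (big_pred1 [tuple]) // => t; rewrite [t]tuple0 /= eqxx. Qed.

Lemma big_tupleS (R : Type) (idx : R) (op : Monoid.com_law idx) n
    (F : n.+1.-tuple T -> R) :
  \big[op/idx]_(t : n.+1.-tuple T) F t =
  \big[op/idx]_(x : T) \big[op/idx]_(t : n.-tuple T) F [tuple of x :: t].
Proof.
rewrite pair_big (reindex (fun p : T * n.-tuple T => [tuple of p.1 :: p.2])) //=.
exists (fun t : n.+1.-tuple T => (thead t, behead_tuple t)).
  by move=> [x t] _; congr pair; apply: val_inj.
by move=> [[|x s] //= st] _; apply: val_inj.
Qed.

Lemma sum_tuple_eq n (eta : seq T) : size eta = n ->
  \sum_(t : n.-tuple T) ((t : seq T) == eta) = 1.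
Proof.
move=> /eqP eta_n; rewrite (bigD1 (Tuple eta_n)) //= eqxx big1 // => t t_ne.
by case: (_ =P eta) => // t_eta; case/eqP: t_ne; apply: val_inj.
Qed.

Lemma sum_eq_muln (a : T) (G : T -> nat) : \sum_(c : T) (c == a) * G c = G a.
Proof. by rewrite (bigD1 a) //= eqxx mul1n big1 ?addn0 // => c /negbTE ->. Qed.

Definition shuffle_count k j (eta : seq T) : nat :=
  \sum_(nu : k.-tuple T) \sum_(xi : j.-tuple T) shcoef nu xi eta.

Lemma shuffle_count0l j (eta : seq T) : size eta = j -> shuffle_count 0 j eta = 1.
Proof.
move=> eta_j; rewrite /shuffle_count big_tuple0 -(sum_tuple_eq eta_j).
by apply: eq_bigr => xi _; rewrite /shcoef /= addn0 eq_sym.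
Qed.

Lemma shuffle_count0r k (eta : seq T) : size eta = k -> shuffle_count k 0 eta = 1.
Proof.
move=> eta_k; rewrite /shuffle_count -(sum_tuple_eq eta_k).
by apply: eq_bigr => nu _; rewrite big_tuple0 /shcoef shw_nil_r /= addn0 eq_sym.
Qed.

Lemma shuffle_countSS k j (a : T) (eta : seq T) :
  shuffle_count k.+1 j.+1 (a :: eta) =
  shuffle_count k j.+1 eta + shuffle_count k.+1 j eta.
Proof.
rewrite /shuffle_count big_tupleS.
under eq_bigr do under eq_bigr do rewrite big_tupleS /=.
under eq_bigr do under eq_bigr do under eq_bigr do under eq_bigr do rewrite shcoef_cons.
under eq_bigr do under eq_bigr do under eq_bigr do rewrite big_split /=.
under eq_bigr do under eq_bigr do rewrite big_split /=.
under eq_bigr do rewrite big_split /=.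
rewrite big_split /=; congr (_ + _).
  under eq_bigr do under eq_bigr do under eq_bigr do rewrite -big_distrr.
  under eq_bigr do under eq_bigr do rewrite -big_distrr.
  under eq_bigr do rewrite -big_distrr.
  rewrite sum_eq_muln; apply: eq_bigr => nu _; by rewrite big_tupleS.
rewrite [in RHS]big_tupleS; apply: eq_bigr => b _; apply: eq_bigr => nu _ /=.
under eq_bigr do rewrite -big_distrr.
by rewrite sum_eq_muln.
Qed.

Lemma shuffle_count_bin k j (eta : seq T) : size eta = k + j ->
  shuffle_count k j eta = 'C(k + j, k).
Proof.
elim: eta k j => [|a eta IH] [|k] [|j] //= eta_kj.
- by rewrite shuffle_count0l.
- by rewrite shuffle_count0l ?bin0.
- by rewrite addn0 in eta_kj *; rewrite shuffle_count0r ?binn.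
move: eta_kj; rewrite addSn addnS => -[eta_kj].
by rewrite shuffle_countSS !IH ?addSn ?addnS // binS addnC.
Qed.

End ShuffleCount.

Local Open Scope ring_scope.

Section KepsBound.
Variable R : realType.

Lemma Keps_term_le_Khat (eps : R) n : 0 < eps ->
  n.+1%:R / (1 + eps) ^+ n <= Khat eps.
Proof.
move=> eps_gt0; have e1_gt0 : 0 < 1 + eps by rewrite addr_gt0.
set a := ln (1 + eps); have a_gt0 : 0 < a by rewrite ln_gt0 // ltrDl.
have expRna : expR (n.+1%:R * a) = (1 + eps) ^+ n.+1.
  by rewrite mulr_natl -lnXn // lnK // posrE exprn_gt0.
have : n.+1%:R * a <= (1 + eps) ^+ n.+1 * expR (-1).
  by have := expR_ge1Dx (n.+1%:R * a - 1); rewrite addrCA subrr addr0 expRD expRna.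
rewrite ler_pdivrMr ?exprn_gt0 // /Khat -/a.
have -> : expR (-1) * (1 + eps) / a * (1 + eps) ^+ n
    = (1 + eps) ^+ n.+1 * expR (-1) / a.
  by rewrite exprS; field; rewrite gt_eqF.
by rewrite ler_pdivlMr.
Qed.

Lemma Keps_le_Khat m (eps : R) : 0 < eps -> (Keps m eps <= (Khat eps)%:E)%E.
Proof.
by move=> eps_gt0; apply: ge_ereal_sup => _ [eta _ <-]; rewrite lee_fin Keps_term_le_Khat.
Qed.

End KepsBound.

Lemma ereal_sup_range_EFin (R : realType) (I : Type) (f : I -> R) (i0 : I) :
  (ereal_sup (range (fun i => (f i)%:E)) < +oo)%E ->
  exists2 s : R, ereal_sup (range (fun i => (f i)%:E)) = s%:E & forall i, f i <= s.
Proof.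
set S := ereal_sup _ => S_fin.
have le_S i : ((f i)%:E <= S)%E by apply: ereal_sup_ubound; exists i.
have S_num : S \is a fin_num.
  by rewrite fin_numE -ltey S_fin andbT -ltNye (lt_le_trans (ltNyr _) (le_S i0)).
by exists (fine S) => [|i]; rewrite ?fineK // -lee_fin fineK.
Qed.

Section SubmultiplicativeSeminorm.
Variables (R : realType) (K : nzSemiRingType) (nrm : K -> R).
Hypothesis nrm0 : nrm 0 = 0.
Hypothesis nrm_ge0 : forall x, 0 <= nrm x.
Hypothesis nrmD : forall x y, nrm (x + y) <= nrm x + nrm y.
Hypothesis nrmM : forall x y, nrm (x * y) <= nrm x * nrm y.

Lemma nrm_sum (I : Type) (r : seq I) (P : pred I) (F : I -> K) :
  nrm (\sum_(i <- r | P i) F i) <= \sum_(i <- r | P i) nrm (F i).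
Proof.
elim/big_rec2: _ => [|i y1 y2 _ IH]; first by rewrite nrm0.
by apply: le_trans (nrmD _ _) _; rewrite lerD2l.
Qed.

Lemma nrmMn x n : nrm (x *+ n) <= nrm x *+ n.
Proof. by rewrite -(subn0 n) -!sumr_const_nat nrm_sum. Qed.

Lemma linf_norm_EFin (m l : nat) (M : R) (c : Defs.series m l K) : 0 < M ->
  (linf_norm nrm M c < +oo)%E ->
  exists N : R, [/\ linf_norm nrm M c = N%:E, 0 <= N &
    forall eta i, nrm (c eta i) <= N * (M ^+ size eta * (size eta)`!%:R)].
Proof.
move=> M_gt0 /(ereal_sup_range_EFin [::]) [N cN le_N]; exists N; split => //.
  by apply: le_trans (le_N [::]); rewrite expr0 mul1r divr1 bigmax_ge_id.
move=> eta i; rewrite -ler_pdivrMr ?mulr_gt0 ?exprn_gt0 ?ltr0n ?fact_gt0 //.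
apply: le_trans (le_N eta).
by rewrite ler_pM2r ?invr_gt0 ?mulr_gt0 ?exprn_gt0 ?ltr0n ?fact_gt0 // le_bigmax.
Qed.

Section ShuffleBound.
Variables (m l : nat) (M Nc Nd : R) (c d : Defs.series m l K).
Hypothesis c_le : forall eta i, nrm (c eta i) <= Nc * (M ^+ size eta * (size eta)`!%:R).
Hypothesis d_le : forall eta i, nrm (d eta i) <= Nd * (M ^+ size eta * (size eta)`!%:R).

Lemma nrm_shuffle_layer_le (eta : seq 'I_m.+1) i k : (k <= size eta)%N ->
  nrm (\sum_(nu : k.-tuple 'I_m.+1) \sum_(xi : (size eta - k).-tuple 'I_m.+1)
         (c nu i * d xi i) *+ shcoef (nu : seq _) (xi : seq _) eta)
  <= Nc * Nd * (M ^+ size eta * (size eta)`!%:R).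
Proof.
move=> k_le; set n := size eta.
have nrm_term (nu : k.-tuple 'I_m.+1) (xi : (n - k).-tuple 'I_m.+1) :
    nrm ((c nu i * d xi i) *+ shcoef (nu : seq _) (xi : seq _) eta)
    <= Nc * (M ^+ k * k`!%:R) * (Nd * (M ^+ (n - k) * (n - k)`!%:R))
       * (shcoef (nu : seq _) (xi : seq _) eta)%:R.
  apply: le_trans (nrmMn _ _) _; rewrite -[nrm _ *+ _]mulr_natr; apply: ler_wpM2r => //.
  apply: le_trans (nrmM _ _) _; apply: ler_pM; [exact: nrm_ge0 | exact: nrm_ge0 | |].
    by have := c_le nu i; rewrite size_tuple.
  by have := d_le xi i; rewrite size_tuple.
apply: le_trans (nrm_sum _ _ _) _; apply: le_trans (ler_sum _ (fun nu _ =>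
  le_trans (nrm_sum _ _ _) (ler_sum _ (fun xi _ => nrm_term nu xi)))) _.
under eq_bigr do rewrite -big_distrr -natr_sum.
rewrite -big_distrr -natr_sum -/(shuffle_count k (n - k) eta).
rewrite shuffle_count_bin ?subnKC //.
have M_n : M ^+ n = M ^+ k * M ^+ (n - k) by rewrite -exprD subnKC.
rewrite -(bin_fact k_le) !natrM M_n.
by rewrite /n /= le_eqVlt; apply/predU1l; ring.
Qed.

Lemma nrm_shuffle_le (eta : seq 'I_m.+1) i :
  nrm (shuffle c d eta i)
  <= (size eta).+1%:R * (Nc * Nd * (M ^+ size eta * (size eta)`!%:R)).
Proof.
set B := Nc * Nd * _.
have -> : (size eta).+1%:R * B = \sum_(k < (size eta).+1) B.
  by rewrite sumr_const card_ord mulr_natl.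
apply: le_trans (nrm_sum _ _ _) _; apply: ler_sum => k _.
by apply: nrm_shuffle_layer_le; rewrite -ltnS.
Qed.

Lemma linf_norm_shuffle_le (eps Ke : R) :
  0 < M -> 0 < eps -> 0 <= Nc -> 0 <= Nd ->
  (forall eta : seq 'I_m.+1, (size eta).+1%:R / (1 + eps) ^+ size eta <= Ke) ->
  (linf_norm nrm (M * (1 + eps)) (shuffle c d) <= (Ke * Nc * Nd)%:E)%E.
Proof.
move=> M_gt0 eps_gt0 Nc_ge0 Nd_ge0 Ke_ge; have e1_gt0 : 0 < 1 + eps by rewrite addr_gt0.
have Me_gt0 : 0 < M * (1 + eps) by rewrite mulr_gt0.
have Ke_ge0 : 0 <= Ke by apply: le_trans (Ke_ge [::]); rewrite divr1.
apply: ge_ereal_sup => _ [eta _ <-]; rewrite lee_fin; set n := size eta.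
rewrite ler_pdivrMr ?mulr_gt0 ?exprn_gt0 ?ltr0n ?fact_gt0 //.
apply: bigmax_le => [|i _]; first by rewrite !mulr_ge0 ?exprn_ge0 ?mulr_ge0 // ltW.
apply: le_trans (nrm_shuffle_le eta i) _.
have : n.+1%:R <= Ke * (1 + eps) ^+ n by rewrite -ler_pdivrMr ?exprn_gt0 ?Ke_ge.
have -> : Ke * Nc * Nd * ((M * (1 + eps)) ^+ n * n`!%:R)
    = Ke * (1 + eps) ^+ n * (Nc * Nd * (M ^+ n * n`!%:R)) by rewrite exprMn; ring.
by apply: ler_wpM2r; rewrite ?mulr_ge0 ?exprn_ge0 // ltW.
Qed.

End ShuffleBound.

Lemma lemma3p3_for_seminorm : lemma3p3_for nrm.
Proof.
move=> m l M M_gt0 c d /(linf_norm_EFin M_gt0) [Nc [-> Nc_ge0 c_le]].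
move=> /(linf_norm_EFin M_gt0) [Nd [-> Nd_ge0 d_le]] eps eps_gt0 Me.
have Keps_fin : (Keps m eps < +oo)%E := le_lt_trans (Keps_le_Khat m eps_gt0) (ltry _).
have [Ke Keps_Ke Ke_ge] := ereal_sup_range_EFin [::] Keps_fin.
have shuffle_le := linf_norm_shuffle_le c_le d_le M_gt0 eps_gt0 Nc_ge0 Nd_ge0 Ke_ge.
split; [exact: le_lt_trans shuffle_le (ltry _) | | exact: Keps_le_Khat].
by rewrite (_ : Keps m eps = Ke%:E) // -!EFinM.
Qed.

End SubmultiplicativeSeminorm.

Theorem lemma3p3 :
  forall R : realType,
    lemma3p3_for (K := R) (fun x : R => `|x|) /\
    lemma3p3_for (K := complex.complex R) (@complex.ComplexField.Normc.normc R).
Proof.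
move=> R; split; apply: lemma3p3_for_seminorm.
- exact: normr0.
- exact: normr_ge0.
- exact: ler_normD.
- by move=> x y; rewrite normrM.
- exact: complex.ComplexField.Normc.normc0.
- by case=> a b; rewrite sqrtr_ge0.
- exact: complex.le_normcD.
- by move=> x y; rewrite complex.ComplexField.Normc.normcM.
Qed.
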